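(* For every $k\ge 8$, the connected component of $\mathbf{DCM}_k$ containing the rings is not bipartite.
   Context: Let $k\ge 1$ and let $X_{2k}=\{P_1,\dots,P_{2k}\}$ be $2k$ points in convex position in the plane, labeled in clockwise cyclic order. A matching of $X_{2k}$ means a set of $k$ pairwise non-crossing straight segments (edges) with endpoints in $X_{2k}$ covering every point exactly once. Two matchings $M,M'$ of $X_{2k}$ are disjoint compatible if they have no common edge and no edge of $M$ crosses an edge of $M'$. $\mathbf{DCM}_k$ is the graph whose vertices are the matchings of $X_{2k}$, two being adjacent iff they are disjoint compatible. The rings of $X_{2k}$ ($k\ge 2$) are the two matchings $\{P_1P_2,P_3P_4,\dots,P_{2k-1}P_{2k}\}$ and $\{P_2P_3,P_4P_5,\dots,P_{2k}P_1\}$; they are disjoint compatible to each other, hence lie in the same component. *)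

From mathcomp Require Import all_boot.
Set Implicit Arguments. Unset Strict Implicit. Unset Printing Implicit Defensive.

(* Points P_1..P_{2k} in convex position, clockwise, are encoded by their
   labels 0..2k-1 (P_{i+1} <-> i : 'I_(k.*2)).  Since the points are in convex
   position, whether two segments cross depends only on the cyclic order. *)

Definition strictly_between (a b x : nat) : bool := (minn a b < x < maxn a b).

(* The (closed) segments P_aP_b and P_cP_d, with a != b, c != d, cross
   (properly, i.e. share an interior point) iff their four endpoints are
   distinct and exactly one of c, d lies on each side of the chord ab. *)
Definition seg_cross n (a b c d : 'I_n) : bool :=
  [&& a != c, a != d, b != c, b != d &
      strictly_between a b c (+) strictly_between a b d].

(* A matching is encoded by the fixed-point-free involution f mapping each
   point to its partner; its edges are the segments P_i P_(f i). *)
Definition is_matching n (f : {ffun 'I_n -> 'I_n}) : bool :=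
  [forall i, (f i != i) && (f (f i) == i)] &&
  [forall i, forall j, ~~ seg_cross i (f i) j (f j)].

Definition disj_compat n (f g : {ffun 'I_n -> 'I_n}) : bool :=
  [forall i, f i != g i] &&
  [forall i, forall j, ~~ seg_cross i (f i) j (g j)].

(* adjacency of DCM_k; functions that are not matchings are isolated and
   play no role (they are not in the component of the rings). *)
Definition dcm_adj k : rel {ffun 'I_(k.*2) -> 'I_(k.*2)} :=
  fun f g => [&& is_matching f, is_matching g & disj_compat f g].

(* the ring {P1P2, P3P4, ..., P_{2k-1}P_{2k}} *)
Definition ring1 k : {ffun 'I_(k.*2) -> 'I_(k.*2)} :=
  [ffun i : 'I_(k.*2) => insubd i (if odd i then i.-1 else i.+1)].

(* the ring {P2P3, P4P5, ..., P_{2k}P1} *)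
Definition ring2 k : {ffun 'I_(k.*2) -> 'I_(k.*2)} :=
  [ffun i : 'I_(k.*2) => insubd i (if odd i then i.+1 %% k.*2 else (i + k.*2).-1 %% k.*2)].

Definition dcm_component k (x : {ffun 'I_(k.*2) -> 'I_(k.*2)}) :=
  [pred y | connect (@dcm_adj k) x y].

Definition induced_bipartite k (C : pred {ffun 'I_(k.*2) -> 'I_(k.*2)}) : Prop :=
  exists c : {ffun 'I_(k.*2) -> 'I_(k.*2)} -> bool,
    forall x y, x \in C -> y \in C -> dcm_adj x y -> c x != c y.

From mathcomp Require Import all_boot zify.
Set Implicit Arguments. Unset Strict Implicit. Unset Printing Implicit Defensive.

(* An odd closed walk through the ring rules out a proper 2-colouring of its
   component.  Closed walks of a common length L through the rings of 2a and
   2b points can be placed side by side (on P_1..P_2a and P_2a+1..P_2a+2b):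
   edges of different blocks never cross, so this is a closed walk of length
   L through the ring of 2a+2b points.  For 2k = 16, 18, ..., 30 an explicit
   odd closed walk together with the walk ring1, ring2, ring1 yields closed
   walks of every large length, and writing 2k as 16 + ... + 16 + r with
   16 <= r <= 30 gives walks of every large length, odd ones included, for
   all k >= 8. *)

Lemma closed_walk_even (T : finType) (e : rel T) (c : T -> bool) x p :
  (forall y z, connect e x y -> connect e x z -> e y z -> c y != c z) ->
  path e x p -> last x p = x -> ~~ odd (size p).
Proof.
move=> c_proper; suff colour_last y : connect e x y -> path e y p ->
    c (last y p) = c y (+) odd (size p).
  move=> path_p last_p; have := colour_last x (connect0 e x) path_p.
  by rewrite last_p; case: (c x); case: (odd _).
elim: p y => [|z p IHp] y /= xy; first by rewrite addbF.
case/andP=> yz; have xz := connect_trans xy (connect1 yz).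
move=> /(IHp z xz) ->; move: (c_proper y z xy xz yz).
by case: (c y); case: (c z); case: (odd _).
Qed.

Lemma all_iotaP (P : pred nat) n : reflect (forall i, i < n -> P i) (all P (iota 0 n)).
Proof.
by apply: (iffP allP) => P_n i; [move=> lt_in | rewrite mem_iota => /andP[_]];
  apply: P_n; rewrite ?mem_iota.
Qed.

Definition nat_cross (a b c d : nat) : bool :=
  [&& a != c, a != d, b != c, b != d &
      strictly_between a b c (+) strictly_between a b d].

Lemma seg_crossE n (a b c d : 'I_n) : seg_cross a b c d = nat_cross a b c d.
Proof. by []. Qed.

Lemma nat_cross_shift m a b c d :
  nat_cross (m + a) (m + b) (m + c) (m + d) = nat_cross a b c d.
Proof.
by rewrite /nat_cross /strictly_between -!addn_minr -!addn_maxr !ltn_add2l !eqn_add2l.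
Qed.

Lemma nat_cross_sep m a b c d : a < m -> b < m -> m <= c -> m <= d ->
  ~~ nat_cross a b c d && ~~ nat_cross c d a b.
Proof.
move=> am bm mc md; rewrite /nat_cross /strictly_between.
have -> : (minn a b < c < maxn a b) = false by apply/negP; lia.
have -> : (minn a b < d < maxn a b) = false by apply/negP; lia.
have -> : (minn c d < a < maxn c d) = false by apply/negP; lia.
have -> : (minn c d < b < maxn c d) = false by apply/negP; lia.
by rewrite !andbF.
Qed.

(* A matching of n points is also encoded by the sequence of the partners of
   0, ..., n-1, so that the certificates below can be checked by computation. *)
Local Notation "s .[ i ]" := (nth 0 s i).

Section SeqMatchings.
Variable n : nat.

Definition seq_involution (s : seq nat) : bool :=
  all (fun i => [&& s.[i] < n, s.[i] != i & s.[s.[i]] == i]) (iota 0 n).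

Definition seq_disjoint (s t : seq nat) : bool :=
  all (fun i => s.[i] != t.[i]) (iota 0 n).

Definition seq_noncrossing (s t : seq nat) : bool :=
  all (fun i => all (fun j => ~~ nat_cross i s.[i] j t.[j]) (iota 0 n)) (iota 0 n).

Definition seq_matching (s : seq nat) : bool :=
  seq_involution s && seq_noncrossing s s.

Definition seq_adj : rel (seq nat) := fun s t =>
  [&& seq_matching s, seq_matching t, seq_disjoint s t & seq_noncrossing s t].

Lemma seq_involutionP s :
  reflect (forall i, i < n -> [/\ s.[i] < n, s.[i] != i & s.[s.[i]] = i])
          (seq_involution s).
Proof.
apply: (iffP (all_iotaP _ _)) => inv_s i /inv_s; first by case/and3P=> ? ? /eqP.
by case=> -> -> ->; rewrite eqxx.
Qed.

Lemma seq_disjointP s t :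
  reflect (forall i, i < n -> s.[i] != t.[i]) (seq_disjoint s t).
Proof. exact: all_iotaP. Qed.

Lemma seq_noncrossingP s t :
  reflect (forall i j, i < n -> j < n -> ~~ nat_cross i s.[i] j t.[j])
          (seq_noncrossing s t).
Proof.
apply: (iffP (all_iotaP _ _)) => ncr_st i; last first.
  by move=> lt_in; apply/all_iotaP => j; apply: ncr_st.
by move=> j /ncr_st /all_iotaP; apply.
Qed.

Lemma seq_involution_lt s i : seq_involution s -> i < n -> s.[i] < n.
Proof. by move=> /seq_involutionP inv_s /inv_s[]. Qed.

Definition ffun_of_seq (s : seq nat) : {ffun 'I_n -> 'I_n} :=
  [ffun i : 'I_n => insubd i s.[i]].

Lemma ffun_of_seqE s (i : 'I_n) : s.[i] < n -> ffun_of_seq s i = s.[i] :> nat.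
Proof. by move=> lt_si; rewrite ffunE val_insubd lt_si. Qed.

Lemma disj_compat_of_seq s t : seq_involution s -> seq_involution t ->
  seq_disjoint s t -> seq_noncrossing s t ->
  disj_compat (ffun_of_seq s) (ffun_of_seq t).
Proof.
move=> inv_s inv_t /seq_disjointP dis_st /seq_noncrossingP ncr_st.
have lt_s (i : 'I_n) : s.[i] < n by apply: seq_involution_lt.
have lt_t (i : 'I_n) : t.[i] < n by apply: seq_involution_lt.
apply/andP; split; apply/forallP=> i.
  by rewrite -val_eqE /= !ffun_of_seqE //; apply: dis_st.
by apply/forallP=> j; rewrite seg_crossE !ffun_of_seqE //; apply: ncr_st.
Qed.

Lemma is_matching_of_seq s : seq_matching s -> is_matching (ffun_of_seq s).
Proof.
case/andP=> inv_s /seq_noncrossingP ncr_s; apply/andP; split; last first.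
  apply/forallP=> i; apply/forallP=> j.
  by rewrite seg_crossE !ffun_of_seqE ?seq_involution_lt //; apply: ncr_s.
apply/forallP=> i; have [lt_si si_i ssi] := seq_involutionP _ inv_s i (ltn_ord i).
have val_si := ffun_of_seqE lt_si.
by rewrite -!val_eqE /= val_si si_i ffun_of_seqE val_si ?ssi ?eqxx.
Qed.

Lemma seq_adj_ffun s t : seq_adj s t ->
  [&& is_matching (ffun_of_seq s), is_matching (ffun_of_seq t)
    & disj_compat (ffun_of_seq s) (ffun_of_seq t)].
Proof.
case/and4P=> ms mt dis_st ncr_st; rewrite !is_matching_of_seq //=.
by apply: disj_compat_of_seq => //; [case/andP: ms | case/andP: mt].
Qed.

End SeqMatchings.

Definition ringseq n := [seq (if odd i then i.-1 else i.+1) | i <- iota 0 n].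

Lemma nth_ringseq n i : i < n -> (ringseq n).[i] = if odd i then i.-1 else i.+1.
Proof. by move=> lt_in; rewrite (nth_map 0) ?size_iota // nth_iota. Qed.

Lemma ring1E k : ring1 k = ffun_of_seq k.*2 (ringseq k.*2).
Proof. by apply/ffunP=> i; apply: val_inj; rewrite !ffunE !val_insubd nth_ringseq. Qed.

Section Juxtaposition.
Variables m n : nat.

Definition juxtapose (s t : seq nat) : seq nat :=
  [seq (if i < m then s.[i] else m + t.[i - m]) | i <- iota 0 (m + n)].

Lemma nth_juxtapose s t i : i < m + n ->
  (juxtapose s t).[i] = if i < m then s.[i] else m + t.[i - m].
Proof. by move=> lt_i; rewrite (nth_map 0) ?size_iota // nth_iota. Qed.

Lemma juxtapose_ring : ~~ odd m -> ~~ odd n ->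
  juxtapose (ringseq m) (ringseq n) = ringseq (m + n).
Proof.
move=> even_m even_n; apply: (@eq_from_nth _ 0); first by rewrite !size_map !size_iota.
move=> i; rewrite size_map size_iota => lt_i.
rewrite nth_ringseq // nth_juxtapose //; case: ifP => [lt_im|/negbT]; rewrite -?leqNgt.
  by rewrite nth_ringseq.
move=> le_mi; rewrite nth_ringseq ?oddB // ?(negbTE even_m) ?addbF; last by lia.
case: ifP => odd_i.
  suff : i != m by lia.
  by apply: contraTneq odd_i => ->; rewrite (negbTE even_m).
suff : i.+1 != m + n by lia.
by apply/eqP => /(congr1 odd); rewrite oddD /= odd_i (negbTE even_m) (negbTE even_n).
Qed.

Lemma seq_involution_juxtapose s t : seq_involution m s -> seq_involution n t ->
  seq_involution (m + n) (juxtapose s t).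
Proof.
move=> /seq_involutionP inv_s /seq_involutionP inv_t.
apply/seq_involutionP => i lt_i; rewrite nth_juxtapose //.
case: (ltnP i m) => [lt_im|le_mi].
  have [lt_si si_i ssi] := inv_s i lt_im.
  by rewrite nth_juxtapose ?lt_si ?ssi; [split=> //; lia | lia].
have lt_im_n : i - m < n by lia.
have [lt_ti ti_i tti] := inv_t (i - m) lt_im_n.
rewrite nth_juxtapose; last by lia.
rewrite [m + _ < m]ltnNge leq_addr /= addKn tti subnKC //; split=> //; first by lia.
by apply: contra ti_i => /eqP ti_i; apply/eqP; lia.
Qed.

Lemma seq_disjoint_juxtapose s s' t t' : seq_disjoint m s s' -> seq_disjoint n t t' ->
  seq_disjoint (m + n) (juxtapose s t) (juxtapose s' t').
Proof.
move=> /seq_disjointP dis_s /seq_disjointP dis_t.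
apply/seq_disjointP => i lt_i; rewrite !nth_juxtapose //.
case: ifP => [/dis_s //|/negbT]; rewrite -leqNgt eqn_add2l => le_mi.
by apply: dis_t; lia.
Qed.

Lemma seq_noncrossing_juxtapose s s' t t' :
  seq_involution m s -> seq_involution m s' ->
  seq_involution n t -> seq_involution n t' ->
  seq_noncrossing m s s' -> seq_noncrossing n t t' ->
  seq_noncrossing (m + n) (juxtapose s t) (juxtapose s' t').
Proof.
move=> inv_s inv_s' inv_t inv_t' /seq_noncrossingP ncr_s /seq_noncrossingP ncr_t.
apply/seq_noncrossingP => i j lt_i lt_j; rewrite !nth_juxtapose //.
case: (ltnP i m) => [lt_im|le_mi]; case: (ltnP j m) => [lt_jm|le_mj].
- exact: ncr_s.
- have lt_si := seq_involution_lt inv_s lt_im.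
  by case/andP: (nat_cross_sep lt_im lt_si le_mj (leq_addr t'.[j - m] m)).
- have lt_sj := seq_involution_lt inv_s' lt_jm.
  by case/andP: (nat_cross_sep lt_jm lt_sj le_mi (leq_addr t.[i - m] m)).
- rewrite -[in X in nat_cross X](subnKC le_mi) -[in X in nat_cross _ _ X](subnKC le_mj).
  by rewrite nat_cross_shift; apply: ncr_t; lia.
Qed.

Lemma seq_adj_juxtapose s s' t t' : seq_adj m s s' -> seq_adj n t t' ->
  seq_adj (m + n) (juxtapose s t) (juxtapose s' t').
Proof.
case/and4P=> /andP[inv_s ncr_s] /andP[inv_s' ncr_s'] dis_s ncr_ss'.
case/and4P=> /andP[inv_t ncr_t] /andP[inv_t' ncr_t'] dis_t ncr_tt'.
by rewrite /seq_adj /seq_matching !seq_involution_juxtapose ?seq_disjoint_juxtapose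
  ?seq_noncrossing_juxtapose.
Qed.

Definition juxtapose_walk (p q : seq (seq nat)) : seq (seq nat) :=
  [seq juxtapose x.1 x.2 | x <- zip p q].

Lemma path_juxtapose_walk p q s t : size p = size q ->
  path (seq_adj m) s p -> path (seq_adj n) t q ->
  path (seq_adj (m + n)) (juxtapose s t) (juxtapose_walk p q).
Proof.
elim: p q s t => [|s' p IHp] [|t' q] //= s t [size_pq] /andP[ss' ps'] /andP[tt' qt'].
by rewrite seq_adj_juxtapose //=; apply: IHp.
Qed.

Lemma last_juxtapose_walk p q s t : size p = size q ->
  last (juxtapose s t) (juxtapose_walk p q) = juxtapose (last s p) (last t q).
Proof. by elim: p q s t => [|s' p IHp] [|t' q] //= s t [/IHp]. Qed.

End Juxtaposition.

Definition closed_ring_walk n (p : seq (seq nat)) : bool :=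
  path (seq_adj n) (ringseq n) p && (last (ringseq n) p == ringseq n).

Definition ring_walk_length n L := exists2 p, size p = L & closed_ring_walk n p.

Definition long_ring_walks n := exists N, forall L, N <= L -> ring_walk_length n L.

Lemma ring_walk_length_add n L1 L2 :
  ring_walk_length n L1 -> ring_walk_length n L2 -> ring_walk_length n (L1 + L2).
Proof.
case=> p <- /andP[path_p /eqP last_p] [q <- /andP[path_q last_q]].
exists (p ++ q); first exact: size_cat.
by rewrite /closed_ring_walk cat_path last_cat last_p path_p path_q.
Qed.

Lemma ring_walk_length_juxtapose m n L : ~~ odd m -> ~~ odd n ->
  ring_walk_length m L -> ring_walk_length n L -> ring_walk_length (m + n) L.
Proof.
move=> even_m even_n [p size_p /andP[path_p /eqP last_p]].
case=> q size_q /andP[path_q /eqP last_q].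
exists (juxtapose_walk m n p q); first by rewrite size_map size_zip size_p size_q minnn.
rewrite /closed_ring_walk -juxtapose_ring // path_juxtapose_walk ?size_p //=.
by rewrite last_juxtapose_walk ?last_p ?last_q ?size_p.
Qed.

Lemma long_ring_walks_add m n : ~~ odd m -> ~~ odd n ->
  long_ring_walks m -> long_ring_walks n -> long_ring_walks (m + n).
Proof.
move=> even_m even_n [N1 walks_m] [N2 walks_n].
exists (maxn N1 N2) => L; rewrite geq_max => /andP[le_N1 le_N2].
exact: ring_walk_length_juxtapose (walks_m L le_N1) (walks_n L le_N2).
Qed.

Lemma long_ring_walks_of_odd n L : odd L ->
  ring_walk_length n L -> ring_walk_length n 2 -> long_ring_walks n.
Proof.
move=> odd_L walk_L walk_2.
have walk_even j : ring_walk_length n j.*2.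
  elim: j => [|j IHj]; first by exists [::] => //; rewrite /closed_ring_walk /= eqxx.
  by rewrite doubleS -add2n; apply: ring_walk_length_add.
exists L => L' le_LL'; have [odd_L'|even_L'] := boolP (odd L').
  have -> : L' = L + (L' - L)./2.*2.
    by have := odd_double_half (L' - L); rewrite oddB // odd_L odd_L' /=; lia.
  exact: ring_walk_length_add.
by rewrite -[L']odd_double_half (negbTE even_L') add0n.
Qed.

(* Each entry (n, p) is a closed walk of odd length through the ring of n
   points, listed without its starting point ringseq n. *)
Definition odd_ring_walks : seq (nat * seq (seq nat)) := [::
  (16, [:: [:: 5; 2; 1; 4; 3; 0; 15; 14; 13; 10; 9; 12; 11; 8; 7; 6];
           [:: 15; 4; 3; 2; 1; 6; 5; 8; 7; 12; 11; 10; 9; 14; 13; 0];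
           [:: 13; 2; 1; 4; 3; 8; 7; 6; 5; 10; 9; 12; 11; 0; 15; 14];
           [:: 15; 12; 11; 10; 9; 6; 5; 8; 7; 4; 3; 2; 1; 14; 13; 0];
           ringseq 16]);
  (18, [:: [:: 3; 2; 1; 0; 17; 6; 5; 8; 7; 10; 9; 12; 11; 14; 13; 16; 15; 4];
           [:: 1; 0; 3; 2; 5; 4; 17; 16; 15; 14; 11; 10; 13; 12; 9; 8; 7; 6];
           [:: 5; 2; 1; 4; 3; 0; 7; 6; 9; 8; 13; 12; 11; 10; 15; 14; 17; 16];
           [:: 9; 4; 3; 2; 1; 6; 5; 8; 7; 0; 11; 10; 13; 12; 17; 16; 15; 14];
           [:: 13; 2; 1; 4; 3; 8; 7; 6; 5; 10; 9; 12; 11; 0; 15; 14; 17; 16];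
           [:: 17; 12; 11; 10; 9; 6; 5; 8; 7; 4; 3; 2; 1; 14; 13; 16; 15; 0];
           ringseq 18]);
  (20, [:: [:: 5; 2; 1; 4; 3; 0; 19; 18; 17; 16; 15; 12; 11; 14; 13; 10; 9; 8; 7; 6];
           [:: 19; 4; 3; 2; 1; 6; 5; 8; 7; 10; 9; 14; 13; 12; 11; 16; 15; 18; 17; 0];
           [:: 15; 2; 1; 4; 3; 10; 7; 6; 9; 8; 5; 12; 11; 14; 13; 0; 17; 16; 19; 18];
           [:: 19; 14; 13; 12; 11; 6; 5; 8; 7; 10; 9; 4; 3; 2; 1; 16; 15; 18; 17; 0];
           ringseq 20]);
  (22, [:: [:: 3; 2; 1; 0; 21; 6; 5; 8; 7; 10; 9; 12; 11; 14; 13; 16; 15; 18; 17; 20; 19; 4];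
           [:: 1; 0; 3; 2; 5; 4; 7; 6; 21; 20; 19; 18; 13; 12; 15; 14; 17; 16; 11; 10; 9; 8];
           [:: 7; 2; 1; 4; 3; 6; 5; 0; 9; 8; 11; 10; 17; 14; 13; 16; 15; 12; 19; 18; 21; 20];
           [:: 11; 6; 3; 2; 5; 4; 1; 8; 7; 10; 9; 0; 13; 12; 15; 14; 17; 16; 21; 20; 19; 18];
           [:: 17; 2; 1; 4; 3; 6; 5; 10; 9; 8; 7; 12; 11; 14; 13; 16; 15; 0; 19; 18; 21; 20];
           [:: 21; 16; 15; 14; 13; 12; 11; 8; 7; 10; 9; 6; 5; 4; 3; 2; 1; 18; 17; 20; 19; 0];
           ringseq 22]);
  (24, [:: [:: 3; 2; 1; 0; 23; 6; 5; 22; 21; 20; 19; 12; 11; 14; 13; 16; 15; 18; 17; 10; 9; 8; 7; 4];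
           [:: 1; 0; 3; 2; 5; 4; 23; 8; 7; 10; 9; 14; 13; 12; 11; 18; 17; 16; 15; 20; 19; 22; 21; 6];
           [:: 23; 2; 1; 4; 3; 6; 5; 10; 9; 8; 7; 12; 11; 14; 13; 16; 15; 18; 17; 22; 21; 20; 19; 0];
           [:: 17; 16; 15; 14; 13; 12; 11; 8; 7; 10; 9; 6; 5; 4; 3; 2; 1; 0; 23; 20; 19; 22; 21; 18];
           ringseq 24]);
  (26, [:: [:: 5; 2; 1; 4; 3; 0; 15; 14; 13; 10; 9; 12; 11; 8; 7; 6; 25; 24; 23; 20; 19; 22; 21; 18; 17; 16];
           [:: 25; 4; 3; 2; 1; 6; 5; 8; 7; 12; 11; 10; 9; 14; 13; 16; 15; 18; 17; 22; 21; 20; 19; 24; 23; 0];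
           [:: 23; 2; 1; 4; 3; 8; 7; 6; 5; 10; 9; 12; 11; 18; 15; 14; 17; 16; 13; 20; 19; 22; 21; 0; 25; 24];
           [:: 25; 22; 21; 10; 9; 6; 5; 8; 7; 4; 3; 20; 19; 14; 13; 16; 15; 18; 17; 12; 11; 2; 1; 24; 23; 0];
           ringseq 26]);
  (28, [:: [:: 17; 8; 7; 4; 3; 6; 5; 2; 1; 16; 15; 12; 11; 14; 13; 10; 9; 0; 27; 26; 25; 22; 21; 24; 23; 20; 19; 18];
           [:: 27; 2; 1; 6; 5; 4; 3; 8; 7; 10; 9; 14; 13; 12; 11; 16; 15; 18; 17; 20; 19; 24; 23; 22; 21; 26; 25; 0];
           [:: 1; 0; 25; 4; 3; 6; 5; 10; 9; 8; 7; 12; 11; 14; 13; 20; 17; 16; 19; 18; 15; 22; 21; 24; 23; 2; 27; 26];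
           [:: 27; 2; 1; 24; 23; 12; 11; 8; 7; 10; 9; 6; 5; 22; 21; 16; 15; 18; 17; 20; 19; 14; 13; 4; 3; 26; 25; 0];
           ringseq 28]);
  (30, [:: [:: 19; 18; 11; 10; 9; 6; 5; 8; 7; 4; 3; 2; 17; 14; 13; 16; 15; 12; 1; 0; 29; 28; 27; 24; 23; 26; 25; 22; 21; 20];
           [:: 29; 2; 1; 4; 3; 8; 7; 6; 5; 10; 9; 12; 11; 16; 15; 14; 13; 18; 17; 20; 19; 22; 21; 26; 25; 24; 23; 28; 27; 0];
           [:: 1; 0; 3; 2; 27; 6; 5; 8; 7; 12; 11; 10; 9; 14; 13; 16; 15; 22; 19; 18; 21; 20; 17; 24; 23; 26; 25; 4; 29; 28];
           [:: 29; 2; 1; 4; 3; 26; 25; 14; 13; 10; 9; 12; 11; 8; 7; 24; 23; 18; 17; 20; 19; 22; 21; 16; 15; 6; 5; 28; 27; 0];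
           ringseq 30])].

Definition ring2seq n := [seq (if odd i then i.+1 %% n else (i + n).-1 %% n) | i <- iota 0 n].

Lemma odd_ring_walksP :
  all (fun w => [&& odd (size w.2), closed_ring_walk w.1 w.2
                  & closed_ring_walk w.1 [:: ring2seq w.1; ringseq w.1]]) odd_ring_walks.
Proof. by vm_compute. Qed.

Lemma long_ring_walks_small k : 8 <= k <= 15 -> long_ring_walks k.*2.
Proof.
move=> k_range; have /mapP[w w_in w_k] : k.*2 \in map fst odd_ring_walks.
  by rewrite /= !inE; lia.
case/and3P: (allP odd_ring_walksP w w_in); rewrite -w_k => odd_w walk_w walk_2.
by apply: long_ring_walks_of_odd odd_w _ _; [exists w.2 | exists [:: ring2seq k.*2; ringseq k.*2]].
Qed.

Lemma long_ring_walks_double k : 8 <= k -> long_ring_walks k.*2.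
Proof.
elim/ltn_ind: k => k IHk le_8k; case: (leqP k 15) => [le_k15|lt_15k].
  by apply: long_ring_walks_small; rewrite le_8k.
have -> : k.*2 = 16 + (k - 8).*2 by lia.
apply: long_ring_walks_add; rewrite ?odd_double //.
  exact: (@long_ring_walks_small 8).
by apply: IHk; lia.
Qed.

Theorem mainTheorem17 (k : nat) (hk : 8 <= k) :
  ~ induced_bipartite (dcm_component (ring1 k)).
Proof.
case=> c c_proper; have [N walks] := long_ring_walks_double hk.
have [p size_p /andP[path_p /eqP last_p]] : ring_walk_length k.*2 N.*2.+1.
  by apply: walks; lia.
have path_ffun : path (@dcm_adj k) (ring1 k) (map (ffun_of_seq k.*2) p).
  by rewrite ring1E path_map; apply: sub_path path_p => s t; apply: seq_adj_ffun.
have last_ffun : last (ring1 k) (map (ffun_of_seq k.*2) p) = ring1 k.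
  by rewrite ring1E last_map last_p.
have := closed_walk_even c_proper path_ffun last_ffun.
by rewrite size_map size_p /= odd_double.
Qed.
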